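(* Let $S \in \mathbb{R}^{n\times n}$ be a diagonal matrix whose diagonal entries are strictly positive and bounded. Then for every $G \in \mathbb{R}^{m \times n}$ with $G \neq 0$, $$\langle G, \operatorname{PolarFactor}(G S) \rangle > 0.$$
   Context: $\langle A, B\rangle = \operatorname{tr}(A^\top B)$ denotes the Frobenius inner product. For a matrix $X$, $\operatorname{PolarFactor}(X) = X (X^\top X)^{-1/2}$, where $(X^\top X)^{-1/2}$ is the positive semidefinite inverse square root taken on the support of $X^\top X$ (Moore–Penrose inverse square root when $X$ is rank deficient); equivalently, if $X = U\Sigma V^\top$ is a compact singular value decomposition, $\operatorname{PolarFactor}(X) = UV^\top$. No squareness or full-rank assumption is made on $G$. *)

From HB Require Import structures.
From mathcomp Require Import all_boot all_order all_algebra.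
From mathcomp Require Import reals.
From Stdlib Require Import ClassicalEpsilon.
Set Implicit Arguments. Unset Strict Implicit. Unset Printing Implicit Defensive.
Import Order.TTheory GRing.Theory Num.Theory.
Local Open Scope ring_scope.

Definition frob (R : realType) (m n : nat) (A B : 'M[R]_(m, n)) : R :=
  \tr (A^T *m B).

Definition is_polar_of (R : realType) (m n : nat) (X Q : 'M[R]_(m, n)) : Prop :=
  exists (r : nat) (U : 'M[R]_(m, r)) (V : 'M[R]_(n, r)) (s : 'rV[R]_r),
    [/\ U^T *m U = 1%:M, V^T *m V = 1%:M, (forall i, 0 < s 0 i),
        X = U *m diag_mx s *m V^T & Q = U *m V^T].

(* PolarFactor(X) = U V^T for a compact SVD of X (well defined: independent
   of the chosen SVD).  Chosen classically; defaults to 0 only if no compact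
   SVD existed, which never happens over the reals. *)
Definition PolarFactor (R : realType) (m n : nat) (X : 'M[R]_(m, n)) : 'M[R]_(m, n) :=
  match excluded_middle_informative (exists Q, is_polar_of X Q) with
  | left h => proj1_sig (constructive_indefinite_description _ h)
  | right _ => 0
  end.

(* Write G S = U diag(s) V^T as a compact SVD.  As S = diag(d) is invertible,
   G^T U V^T = diag(1/d) V diag(s) V^T, whose trace sum_(i,k) V_ik^2 s_k / d_i
   is a sum of nonnegative terms vanishing only if V = 0, i.e. only if G = 0.
   The compact SVD exists over any real closed field.  A real symmetric B has
   a real eigenvalue: if a is a complex root of its characteristic polynomial,
   then (B - Re a)^2 + (Im a)^2 is singular, because its complexification is
   (B - a)(B - conj a), and a null vector x gives
   |x (B - Re a)|^2 + (Im a)^2 |x|^2 = 0.  Hence X^T X has a unit eigenvector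
   v for an eigenvalue mu > 0 (a nonzero one exists because symmetric
   nilpotent matrices vanish), and
   X = sqrt mu u v^T + X1 with u = X v / sqrt mu a unit vector orthogonal to
   the range of X1 and X1 v = 0; recursing on X1 yields the SVD. *)

From HB Require Import structures.
From mathcomp Require Import all_boot all_order all_algebra.
From mathcomp Require Import reals complex.
From mathcomp Require Import ring zify.
From Stdlib Require Import ClassicalEpsilon.
Set Implicit Arguments. Unset Strict Implicit. Unset Printing Implicit Defensive.
Import Order.TTheory GRing.Theory Num.Theory.
Local Open Scope ring_scope.


Section SumOfSquares.
Variable R : realDomainType.

Lemma row_mul_tr_sqr n (u : 'rV[R]_n) : (u *m u^T) 0 0 = \sum_j u 0 j ^+ 2.
Proof. by rewrite mxE; apply: eq_bigr => j _; rewrite mxE -expr2. Qed.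

Lemma row_mul_tr_ge0 n (u : 'rV[R]_n) : 0 <= (u *m u^T) 0 0.
Proof. by rewrite row_mul_tr_sqr; apply: sumr_ge0 => j _; apply: sqr_ge0. Qed.

Lemma row_mul_tr_eq0 n (u : 'rV[R]_n) : ((u *m u^T) 0 0 == 0) = (u == 0).
Proof.
apply/idP/eqP => [|->]; last by rewrite mul0mx mxE.
rewrite row_mul_tr_sqr psumr_eq0 => [/allP u0|j _]; last exact: sqr_ge0.
by apply/rowP => j; rewrite mxE; apply/eqP; rewrite -sqrf_eq0; apply: u0 (mem_index_enum j).
Qed.

Lemma trmx_mul_self_eq0 p q (M : 'M[R]_(p, q)) : (M^T *m M == 0) = (M == 0).
Proof.
apply/idP/eqP => [/eqP M0|->]; last by rewrite mulmx0.
apply/trmx_inj/row_matrixP => j; rewrite trmx0 row0; apply/eqP.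
rewrite -row_mul_tr_eq0.
have -> : (row j M^T *m (row j M^T)^T) 0 0 = (M^T *m M) j j.
  by rewrite !mxE; apply: eq_bigr => k _; rewrite !mxE.
by rewrite M0 mxE.
Qed.

Lemma sym_trmxX n (B : 'M[R]_n) k : B^T = B -> (B ^+ k)^T = B ^+ k.
Proof.
move=> symB; elim: k => [|k IHk]; first by rewrite expr0 -idmxE trmx1.
by rewrite exprS -mulmxE trmx_mul IHk symB mulmxE -exprSr exprS.
Qed.

Lemma sym_nilpotent_eq0 n (B : 'M[R]_n) k : B^T = B -> B ^+ k.+1 = 0 -> B = 0.
Proof.
move=> symB; elim: k => [|k IHk] Bk; first by rewrite expr1 in Bk.
apply/IHk/eqP; rewrite -trmx_mul_self_eq0 sym_trmxX // mulmxE -exprD.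
by rewrite addSnnS exprD Bk mulr0.
Qed.

Lemma mxtrace_diag_gram_gt0 m n (a : 'rV[R]_n) (b : 'rV[R]_m) (V : 'M[R]_(n, m)) :
    (forall i, 0 < a 0 i) -> (forall k, 0 < b 0 k) -> V != 0 ->
  0 < \tr (diag_mx a *m V *m diag_mx b *m V^T).
Proof.
move=> a_gt0 b_gt0 V_neq0.
have -> : \tr (diag_mx a *m V *m diag_mx b *m V^T) =
    \sum_i \sum_k a 0 i * V i k ^+ 2 * b 0 k.
  apply: eq_bigr => i _; rewrite mxE; apply: eq_bigr => k _.
  by rewrite mul_mx_diag mul_diag_mx !mxE; ring.
have term_ge0 i k : 0 <= a 0 i * V i k ^+ 2 * b 0 k.
  exact: mulr_ge0 (mulr_ge0 (ltW (a_gt0 i)) (sqr_ge0 _)) (ltW (b_gt0 k)).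
rewrite lt_def sumr_ge0 ?andbT => [|i _]; last exact: sumr_ge0.
apply: contra V_neq0 => /eqP tr0; apply/eqP/matrixP => i k; rewrite mxE.
have := psumr_eq0P (fun i _ => sumr_ge0 _ (fun k _ => term_ge0 i k)) tr0 (i := i) isT.
move=> /(psumr_eq0P (fun k _ => term_ge0 i k)) /(_ k isT) /eqP.
by rewrite !mulf_eq0 (gt_eqF (a_gt0 i)) (gt_eqF (b_gt0 k)) orbb orbF => /eqP.
Qed.
End SumOfSquares.

Section Complexification.
Variable R : rcfType.
Local Notation toC := (real_complex R).

Lemma symmetric_eigenvalue_complex n (B : 'M[R]_n) (a : R[i]) :
    B^T = B -> eigenvalue (map_mx toC B) a ->
  complex.Im a = 0 /\ eigenvalue B (complex.Re a).
Proof.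
move=> symB /eigenvalueP [w wB w_neq0].
set c := complex.Re a; set e := complex.Im a; set C := B - c%:M.
have symC : C^T = C by rewrite /C linearB /= tr_scalar_mx symB.
have mapM : map_mx toC (C *m C + (e ^+ 2)%:M) =
    (map_mx toC B - a%:M) *m (map_mx toC B - (a^*)%C%:M).
  set S : 'M_n := ('i * e%:C)%C%:M.
  have -> : map_mx toC B - a%:M = map_mx toC C - S.
    by rewrite map_mxB map_scalar_mx -addrA -raddfD /= /S -raddfD /= -complexE.
  have -> : map_mx toC B - (a^*)%C%:M = map_mx toC C + S.
    have conj_a : (a^*)%C = (c%:C - 'i * e%:C)%C.
      by rewrite /c /e; case: (a) => x y; simpc.
    by rewrite conj_a map_mxB map_scalar_mx raddfB /= opprB addrA addrAC.
  have YS : map_mx toC C *m S = S *m map_mx toC C by rewrite scalar_mxC.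
  have SS : S *m S = - ((e%:C)%C ^+ 2)%:M.
    by rewrite -scalar_mxM -raddfN /= mulrACA -expr2 sqr_i mulN1r.
  by rewrite map_mxD map_mxM map_scalar_mx rmorphXn mulmxDr !mulmxBl YS SS addrA subrK opprK.
have /det0P [x x_neq0 xM0] : \det (C *m C + (e ^+ 2)%:M) == 0.
  rewrite -(fmorph_eq0 toC) -det_map_mx mapM; apply/det0P; exists w => //.
  by rewrite mulmxA [w *m (_ - _)]mulmxBr mul_mx_scalar wB subrr mul0mx.
have : ((x *m C) *m (x *m C)^T) 0 0 + e ^+ 2 * (x *m x^T) 0 0 = 0.
  transitivity ((x *m (C *m C + (e ^+ 2)%:M) *m x^T) 0 0); last first.
    by rewrite xM0 mul0mx mxE.
  rewrite (mulmxDr x (C *m C)) mulmxDl [RHS]mxE trmx_mul symC !mulmxA.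
  by rewrite mul_mx_scalar -scalemxAl [(_ *: (x *m x^T)) _ _]mxE.
move/eqP; rewrite paddr_eq0 ?row_mul_tr_ge0 ?(mulr_ge0 (sqr_ge0 e)) ?row_mul_tr_ge0 //.
rewrite row_mul_tr_eq0 mulf_eq0 row_mul_tr_eq0 (negbTE x_neq0) orbF sqrf_eq0.
move=> /andP [xC0 /eqP e0]; split => //; apply/eigenvalueP; exists x => //.
by move: xC0; rewrite mulmxBr mul_mx_scalar subr_eq0 => /eqP.
Qed.

Lemma symmetric_eigenvalue_neq0 n (B : 'M[R]_n) :
  B^T = B -> B != 0 -> exists2 mu, mu != 0 & eigenvalue B mu.
Proof.
case: n => [|n] in B *; first by move=> _; rewrite thinmx0 eqxx.
move=> symB B_neq0.
have [k [q q0 cpB]] := multiplicity_XsubC (char_poly B) 0.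
rewrite monic_neq0 ?char_poly_monic //= subr0 in q0 cpB.
have [/eqP/size_poly1P [c c_neq0 qc] | q_nonconst] := eqVneq (size q) 1%N.
  have := Cayley_Hamilton B; rewrite cpB qc rmorphM rmorphXn /= horner_mx_X horner_mx_C.
  rewrite -mulmxE mul_scalar_mx => /eqP; rewrite scaler_eq0 (negbTE c_neq0) /= => /eqP Bk.
  by move/negP: B_neq0; case; apply/eqP/(sym_nilpotent_eq0 (k := k) symB); rewrite exprS Bk mulr0.
have [a qa] : exists a, root (map_poly toC q) a by apply/closed_rootP; rewrite size_map_poly.
have a_neq0 : a != 0.
  by apply: contraNneq q0 => a0; move: qa; rewrite a0 -(rmorph0 toC) /root horner_map fmorph_eq0.
have [Im_a0 BRe_a] : complex.Im a = 0 /\ eigenvalue B (complex.Re a).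
  apply: symmetric_eigenvalue_complex => //.
  by rewrite eigenvalue_root_char -map_char_poly cpB rmorphM rootM qa.
exists (complex.Re a) => //; apply: contraNneq a_neq0 => Re_a0.
by rewrite [a]complexE Re_a0 Im_a0 mulr0 addr0.
Qed.

Lemma gram_eigenvector m n (X : 'M[R]_(m, n)) : X != 0 ->
  exists mu (v : 'cV[R]_n), [/\ 0 < mu, v^T *m v = 1%:M & X^T *m X *m v = mu *: v].
Proof.
move=> X_neq0.
have symB : (X^T *m X)^T = X^T *m X by rewrite trmx_mul trmxK.
have B_neq0 : X^T *m X != 0 by rewrite trmx_mul_self_eq0.
have [mu mu_neq0 /eigenvalueP [x xB x_neq0]] := symmetric_eigenvalue_neq0 symB B_neq0.
set d := (x *m x^T) 0 0.
have d_gt0 : 0 < d by rewrite lt_def row_mul_tr_eq0 x_neq0 row_mul_tr_ge0.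
have mu_gt0 : 0 < mu.
  have : mu * d = ((x *m X^T) *m (x *m X^T)^T) 0 0.
    by rewrite trmx_mul trmxK !mulmxA -(mulmxA x) xB -scalemxAl mxE.
  by rewrite lt_def mu_neq0 -(pmulr_lge0 _ d_gt0) => ->; apply: row_mul_tr_ge0.
exists mu, ((Num.sqrt d)^-1 *: x^T); split => //.
  rewrite !linearZ /= trmxK -scalemxAl scalerA [x *m _]mx11_scalar -/d.
  rewrite scale_scalar_mx -invrM ?unitfE ?sqrtr_eq0 -?ltNge //.
  by rewrite -expr2 sqr_sqrtr ?ltW // mulVf ?gt_eqF.
by rewrite -scalemxAr -symB -trmx_mul xB linearZ scalerA mulrC -scalerA.
Qed.
End Complexification.

Section CompactSVD.
Variable R : realFieldType.

Definition compact_svd m n r (X : 'M[R]_(m, n))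
    (U : 'M[R]_(m, r)) (V : 'M[R]_(n, r)) (s : 'rV[R]_r) : Prop :=
  [/\ U^T *m U = 1%:M, V^T *m V = 1%:M, (forall i, 0 < s 0 i)
    & X = U *m diag_mx s *m V^T].

Lemma compact_svd0 m n : compact_svd (0 : 'M[R]_(m, n)) 0 0 (0 : 'rV_0).
Proof. by split; rewrite ?thinmx0 ?flatmx0 ?mul0mx //; case. Qed.

Lemma mul_diag_mx_pos_eq0 m n (s : 'rV[R]_m) (A : 'M[R]_(m, n)) :
  (forall i, 0 < s 0 i) -> diag_mx s *m A = 0 -> A = 0.
Proof.
move=> s_gt0 /matrixP sA0; apply/matrixP => i j; have /eqP := sA0 i j.
by rewrite mul_diag_mx !mxE mulf_eq0 (gt_eqF (s_gt0 i)) => /eqP.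
Qed.

Section Orthogonality.
Variables (m n r : nat) (X : 'M[R]_(m, n)) (U : 'M[R]_(m, r)) (V : 'M[R]_(n, r)).
Variable s : 'rV[R]_r.
Hypothesis svdX : compact_svd X U V s.

Lemma compact_svd_ker p (K : 'M[R]_(n, p)) : X *m K = 0 -> V^T *m K = 0.
Proof.
case: svdX => UU _ s_gt0 -> /(congr1 (mulmx U^T)); rewrite mulmx0 -!mulmxA mulmxA UU mul1mx.
exact: mul_diag_mx_pos_eq0.
Qed.

Lemma compact_svd_coker p (W : 'M[R]_(p, m)) : W *m X = 0 -> W *m U = 0.
Proof.
case: svdX => _ VV s_gt0 -> /(congr1 (mulmx^~ V)); rewrite mul0mx -!mulmxA VV mulmx1.
move=> /(congr1 trmx); rewrite trmx0 !trmx_mul tr_diag_mx -mulmxA => /(mul_diag_mx_pos_eq0 s_gt0).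
by move=> /(congr1 trmx); rewrite trmx_mul !trmxK trmx0.
Qed.

End Orthogonality.

Lemma compact_svd_cons m n r (X : 'M[R]_(m, n)) U V s (u : 'cV[R]_m) (v : 'cV[R]_n) sigma :
    compact_svd X U V s -> u^T *m u = 1%:M -> v^T *m v = 1%:M -> 0 < sigma ->
    u^T *m U = 0 -> v^T *m V = 0 ->
  compact_svd (sigma *: (u *m v^T) + X) (row_mx u U) (row_mx v V)
    (row_mx sigma%:M s : 'rV_(1 + r)).
Proof.
move=> [UU VV s_gt0 ->] uu vv sigma_gt0 uU vV.
have Uu : U^T *m u = 0 by rewrite -[u]trmxK -trmx_mul uU trmx0.
have Vv : V^T *m v = 0 by rewrite -[v]trmxK -trmx_mul vV trmx0.
split.
- by rewrite tr_row_mx mul_col_row uu uU Uu UU -scalar_mx_block.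
- by rewrite tr_row_mx mul_col_row vv vV Vv VV -scalar_mx_block.
- move=> i; rewrite -(splitK i); case: (split i) => j /=.
    by rewrite row_mxEl mxE (ord1 j) eqxx mulr1n.
  by rewrite row_mxEr.
rewrite diag_mx_row mul_row_block tr_row_mx mul_row_col !mulmx0 addr0 add0r.
have -> : diag_mx (sigma%:M : 'rV_1) = sigma%:M.
  by apply/matrixP => i j; rewrite !mxE !ord1 eqxx.
by rewrite mul_mx_scalar scalemxAl.
Qed.
End CompactSVD.

Lemma gram_rank_one_split (R : rcfType) m n (X : 'M[R]_(m, n)) mu (v : 'cV[R]_n) :
    0 < mu -> v^T *m v = 1%:M -> X^T *m X *m v = mu *: v ->
  let u := (Num.sqrt mu)^-1 *: (X *m v) in let X1 := X - X *m v *m v^T in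
  [/\ u^T *m u = 1%:M, X1 *m v = 0, u^T *m X1 = 0
    & X = Num.sqrt mu *: (u *m v^T) + X1].
Proof.
move=> mu_gt0 vv Xv u X1; set sigma := Num.sqrt mu.
have sigma_gt0 : 0 < sigma by rewrite sqrtr_gt0.
have vX : v^T *m X^T *m X = mu *: v^T.
  by move: (congr1 trmx Xv); rewrite !trmx_mul trmxK mulmxA linearZ.
split.
- rewrite !linearZ /= -scalemxAl scalerA trmx_mul -mulmxA (mulmxA X^T) Xv -scalemxAr vv.
  rewrite -/sigma -[mu](sqr_sqrtr (ltW mu_gt0)) -/sigma.
  by apply/matrixP => i j; rewrite !mxE !ord1 eqxx /=; field; rewrite gt_eqF.
- by rewrite mulmxBl -!mulmxA vv mulmx1 subrr.
- rewrite linearZ /= -scalemxAl trmx_mul mulmxBr !mulmxA vX -!scalemxAl vv mul1mx.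
  by rewrite subrr scaler0.
by rewrite -scalemxAl scalerA mulfV ?gt_eqF // scale1r addrC subrK.
Qed.

Section SVDExistence.
Variable R : rcfType.

Lemma compact_svd_exists_ker m n k (K : 'M[R]_(n, k)) (X : 'M[R]_(m, n)) :
  K^T *m K = 1%:M -> X *m K = 0 ->
  exists r (U : 'M[R]_(m, r)) (V : 'M[R]_(n, r)) (s : 'rV[R]_r), compact_svd X U V s.
Proof.
(* The orthonormal columns of [K] are the directions already split off; *)
(* there are at most [n] of them, which bounds the recursion.           *)
have [j] := ubnP (n - k); elim: j => // j IH in k K X *; rewrite ltnS => nk_le KK XK.
have [->|X_neq0] := eqVneq X 0; first by exists 0%N, 0, 0, 0; apply: compact_svd0.
have [mu [v [mu_gt0 vv Xv]]] := gram_eigenvector X_neq0.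
have [] := gram_rank_one_split mu_gt0 vv Xv.
set u := _ *: (X *m v); set X1 := X - _ => uu X1v uX1 ->.
have Kv : K^T *m v = 0.
  suff /eqP : mu *: (K^T *m v) = 0 by rewrite scaler_eq0 (gt_eqF mu_gt0) => /eqP.
  by rewrite scalemxAr -Xv !mulmxA -trmx_mul XK trmx0 !mul0mx.
have vK : v^T *m K = 0 by rewrite -[K]trmxK -trmx_mul Kv trmx0.
set K' := row_mx K v.
have K'K' : K'^T *m K' = 1%:M.
  by rewrite tr_row_mx mul_col_row KK Kv vK vv -scalar_mx_block.
have k_lt_n : (k < n)%N.
  by have := leq_trans (mxrankM_maxr K'^T K') (rank_leq_row K'); rewrite K'K' mxrank1; lia.
have X1K' : X1 *m K' = 0.
  by rewrite mul_mx_row X1v mulmxBl -!mulmxA vK !mulmx0 XK subrr row_mx0.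
have [|r [U [V [s svdX1]]]] := IH (k + 1)%N K' X1 _ K'K' X1K'; first lia.
exists (1 + r)%N, (row_mx u U), (row_mx v V), (row_mx (Num.sqrt mu)%:M s).
apply: compact_svd_cons; rewrite ?sqrtr_gt0 //; first exact: compact_svd_coker svdX1 _ _ uX1.
by rewrite -[V]trmxK -trmx_mul (compact_svd_ker svdX1 X1v) trmx0.
Qed.

Lemma compact_svd_exists m n (X : 'M[R]_(m, n)) :
  exists r (U : 'M[R]_(m, r)) (V : 'M[R]_(n, r)) (s : 'rV[R]_r), compact_svd X U V s.
Proof. by apply: (@compact_svd_exists_ker _ _ 0 0); rewrite ?mulmx0 // thinmx0. Qed.

End SVDExistence.

Lemma is_polar_of_PolarFactor (R : realType) m n (X : 'M[R]_(m, n)) : is_polar_of X (PolarFactor X).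
Proof.
rewrite /PolarFactor; case: excluded_middle_informative => [h|[]].
  by case: constructive_indefinite_description.
have [r [U [V [s [UU VV s_gt0 XE]]]]] := compact_svd_exists X.
by exists (U *m V^T), r, U, V, s.
Qed.

Theorem mainTheorem2 (R : realType) (m n : nat) (S : 'M[R]_n)
    (S_diag : is_diag_mx S) (S_pos : forall i, 0 < S i i)
    (G : 'M[R]_(m, n)) (G_nz : G != 0) :
  0 < frob G (PolarFactor (G *m S)).
Proof.
have [r [U [V [s [UU _ s_gt0 GSE ->]]]]] := is_polar_of_PolarFactor (G *m S).
move/diag_mxP: S_diag => [d Sd]; rewrite {}Sd in S_pos GSE.
have d_gt0 i : 0 < d 0 i by have := S_pos i; rewrite mxE eqxx mulr1n.
set dV := \row_i (d 0 i)^-1.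
have dV_gt0 i : 0 < dV 0 i by rewrite mxE invr_gt0.
have GE : G = U *m diag_mx s *m V^T *m diag_mx dV.
  rewrite -GSE -mulmxA mulmx_diag.
  have -> : \row_j (d 0 j * dV 0 j) = const_mx 1 by apply/rowP => j; rewrite !mxE mulfV ?gt_eqF.
  by rewrite diag_const_mx mulmx1.
have V_neq0 : V != 0 by apply: contraNneq G_nz => V0; rewrite GE V0 trmx0 mulmx0 mul0mx.
rewrite /frob {1}GE !trmx_mul trmxK !tr_diag_mx !mulmxA -(mulmxA _ U^T) UU mulmx1.
exact: mxtrace_diag_gram_gt0.
Qed.
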